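(* Let $A=D+N\in\mathcal{M}_n(\mathbb{H})$, where $D=\operatorname{diag}(d_1,\dots,d_n)$ with all $d_i\in\mathbb{R}$ and $N=[a_{ij}]$ is a strictly upper triangular (hence nilpotent) matrix whose graph $\mathcal{G}_N$ is a tree. Let $\underline{d}=\min_i d_i$, $\overline{d}=\max_i d_i$ and, for $d\in[\underline{d},\overline{d}]$, $$r(d)=\max\Big\{\sum_{i\ne j}\beta_i\beta_j|a_{ij}|:\ \sum_i d_i\beta_i^2=d,\ \beta\in\mathbb{S}^+_{\mathbb{R}^n}\Big\}.$$ Then $$W(A)=\bigcup_{d\in[\underline{d},\overline{d}]}\mathbb{D}_{\mathbb{H}}(d,r(d)).$$
   Context: $\mathbb{H}$ denotes the real quaternions, $|q|^2=qq^*$. The numerical range of $A\in\mathcal{M}_n(\mathbb{H})$ is $W(A)=\{\mathbf{x}^*A\mathbf{x}:\mathbf{x}\in\mathbb{H}^n,\ \mathbf{x}^*\mathbf{x}=1\}$. $\mathbb{D}_{\mathbb{H}}(c,r)=\{q\in\mathbb{H}:|q-c|\le r\}$. $\mathbb{S}^+_{\mathbb{R}^n}=\{\beta\in\mathbb{R}^n:\|\beta\|=1,\ \beta_i\ge0\ \forall i\}$. The graph $\mathcal{G}_N$ of $N=[a_{ij}]$ is the undirected graph on $\{1,\dots,n\}$ with an edge between $i$ and $j$ (a loop if $i=j$) whenever $a_{ij}\ne0$ or $a_{ji}\ne0$; $N$ is a tree if $\mathcal{G}_N$ is connected and has no cycles. *)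

(* Real quaternions over an arbitrary real closed field R
   (R = the reals is the intended instance). *)
From HB Require Import structures.
From mathcomp Require Import all_boot all_order all_algebra.
Set Implicit Arguments. Unset Strict Implicit. Unset Printing Implicit Defensive.
Import Order.TTheory GRing.Theory Num.Theory.
Local Open Scope ring_scope.

Section Quat.
Variable R : rcfType.

(* q = q0 + q1 i + q2 j + q3 k *)
Record quat := Quat { q0 : R; q1 : R; q2 : R; q3 : R }.

Definition quat_to (q : quat) : R * R * R * R := (q0 q, q1 q, q2 q, q3 q).
Definition quat_of (t : R * R * R * R) : quat :=
  let: (a, b, c, d) := t in Quat a b c d.
Lemma quat_toK : cancel quat_to quat_of. Proof. by case. Qed.
HB.instance Definition _ := Equality.copy quat (can_type quat_toK).

Definition qreal (r : R) : quat := Quat r 0 0 0.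
Definition qzero : quat := qreal 0.
Definition qadd (p q : quat) : quat :=
  Quat (q0 p + q0 q) (q1 p + q1 q) (q2 p + q2 q) (q3 p + q3 q).
Definition qopp (p : quat) : quat := Quat (- q0 p) (- q1 p) (- q2 p) (- q3 p).
Definition qsub (p q : quat) : quat := qadd p (qopp q).
Definition qmul (p q : quat) : quat :=
  Quat (q0 p * q0 q - q1 p * q1 q - q2 p * q2 q - q3 p * q3 q)
       (q0 p * q1 q + q1 p * q0 q + q2 p * q3 q - q3 p * q2 q)
       (q0 p * q2 q - q1 p * q3 q + q2 p * q0 q + q3 p * q1 q)
       (q0 p * q3 q + q1 p * q2 q - q2 p * q1 q + q3 p * q0 q).
Definition qconj (p : quat) : quat := Quat (q0 p) (- q1 p) (- q2 p) (- q3 p).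
(* |q|^2 = q q^*  (a real number; we record its real part) *)
Definition qnorm2 (p : quat) : R := q0 (qmul p (qconj p)).
Definition qnorm (p : quat) : R := Num.sqrt (qnorm2 p).

(* Matrices in M_n(H) are functions 'I_n -> 'I_n -> quat; vectors 'I_n -> quat *)
Definition qsum n (F : 'I_n -> quat) : quat := \big[qadd/qzero]_(i < n) F i.

Definition qform n (A : 'I_n -> 'I_n -> quat) (x : 'I_n -> quat) : quat :=
  qsum (fun i => qsum (fun j => qmul (qmul (qconj (x i)) (A i j)) (x j))).

Definition qunit_vec n (x : 'I_n -> quat) : Prop :=
  qsum (fun i => qmul (qconj (x i)) (x i)) = qreal 1.

Definition numrange n (A : 'I_n -> 'I_n -> quat) (q : quat) : Prop :=
  exists x : 'I_n -> quat, qunit_vec x /\ q = qform A x.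

Definition qdisk (c : quat) (r : R) (q : quat) : Prop := qnorm (qsub q c) <= r.

Definition diag_plus n (d : 'I_n -> R) (N : 'I_n -> 'I_n -> quat) : 'I_n -> 'I_n -> quat :=
  fun i j => qadd (if i == j then qreal (d i) else qzero) (N i j).

Definition strictly_upper n (N : 'I_n -> 'I_n -> quat) : Prop :=
  forall i j : 'I_n, (j <= i)%N -> N i j = qzero.

Definition graphN n (N : 'I_n -> 'I_n -> quat) : rel 'I_n :=
  fun i j => (N i j != qzero) || (N j i != qzero).

(* undirected graph is a tree: connected and without cycles
   (a cycle = closed walk through >= 3 distinct vertices; loops can't occur
   in the strictly upper triangular case, and would also be excluded below) *)
Definition is_tree n (e : rel 'I_n) : Prop :=
  (forall i j : 'I_n, connect e i j) /\
  (forall i : 'I_n, ~~ e i i) /\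
  ~ (exists p : seq 'I_n, [/\ uniq p, (2 < size p)%N & cycle e p]).

Definition pos_sphere n (beta : 'I_n -> R) : Prop :=
  \sum_(i < n) beta i ^+ 2 = 1 /\ forall i, 0 <= beta i.

Definition rvalue n (N : 'I_n -> 'I_n -> quat) (beta : 'I_n -> R) : R :=
  \sum_(i < n) \sum_(j < n | i != j) beta i * beta j * qnorm (N i j).
Definition is_r_max n (d : 'I_n -> R) (N : 'I_n -> 'I_n -> quat) (dd m : R) : Prop :=
  (exists beta, [/\ pos_sphere beta, \sum_(i < n) d i * beta i ^+ 2 = dd
                  & rvalue N beta = m]) /\
  (forall beta, pos_sphere beta -> \sum_(i < n) d i * beta i ^+ 2 = dd ->
                rvalue N beta <= m).

End Quat.

(* Write x^* (D + N) x = dd + sum_{i,j} x_i^* a_ij x_j, where dd is the real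
   number sum_i d_i |x_i|^2 (qform_split).  With beta_i = |x_i|, the triangle
   inequality bounds the second term by r_beta = sum_{i<>j} beta_i beta_j |a_ij|,
   hence by r(dd): this gives W(A) inside the union of disks
   (numrange_sub_disks).

   Conversely, the tree structure lets us choose unit phases w_i with
   w_i^* a_ij w_j = |a_ij| s for any prescribed unit quaternion s
   (tree_alignment), so every point on the boundary of the disk of some
   beta in S^+ is attained by x_i = beta_i w_i (numrange_of_sphere_point).
   A point inside the disk of beta0 is on the boundary of the disk of some
   other beta: along the segment from beta0 to a coordinate vector a quartic
   polynomial changes sign, and the intermediate value theorem for
   polynomials applies (boundary_point). *)

From mathcomp Require Import all_boot all_order all_algebra.
From mathcomp Require Import ring lra.
Set Implicit Arguments. Unset Strict Implicit. Unset Printing Implicit Defensive.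
Import Order.TTheory GRing.Theory Num.Theory.
Local Open Scope ring_scope.

Section QuaternionNorm.
Variable R : rcfType.
Implicit Types p q : quat R.

Definition qcoord (k : nat) p : R :=
  match k with 0 => q0 p | 1 => q1 p | 2 => q2 p | _ => q3 p end.

Definition qscale (c : R) p : quat R :=
  Quat (c * q0 p) (c * q1 p) (c * q2 p) (c * q3 p).

Lemma quat_coordP p q : (forall k, qcoord k p = qcoord k q) -> p = q.
Proof.
case: p q => [a b c d] [a' b' c' d'] E.
by move: (E 0%N) (E 1%N) (E 2%N) (E 3%N) => /= -> -> -> ->.
Qed.

Lemma qcoord_add k p q : qcoord k (qadd p q) = qcoord k p + qcoord k q.
Proof. by case: k => [|[|[|k]]]. Qed.
Lemma qcoord_sub k p q : qcoord k (qsub p q) = qcoord k p - qcoord k q.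
Proof. by case: k => [|[|[|k]]]. Qed.
Lemma qcoord_zero k : qcoord k (qzero R) = 0.
Proof. by case: k => [|[|[|k]]]. Qed.
Lemma qcoord_real k r : qcoord k (qreal r) = (k == 0)%N%:R * r.
Proof. by case: k => [|[|[|k]]] /=; rewrite ?mul1r ?mul0r. Qed.
Lemma qcoord_scale k c p : qcoord k (qscale c p) = c * qcoord k p.
Proof. by case: k => [|[|[|k]]]. Qed.
Lemma qcoord_sum k n (F : 'I_n -> quat R) :
  qcoord k (qsum F) = \sum_(i < n) qcoord k (F i).
Proof. exact: (big_morph (qcoord k) (qcoord_add k) (qcoord_zero k)). Qed.

Lemma qreal_inj : injective (@qreal R).
Proof. by move=> a b [->]. Qed.

Lemma qnorm2E p : qnorm2 p = q0 p ^+ 2 + q1 p ^+ 2 + q2 p ^+ 2 + q3 p ^+ 2.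
Proof. by rewrite /qnorm2 /=; ring. Qed.

Lemma qnorm2_ge0 p : 0 <= qnorm2 p.
Proof. by rewrite qnorm2E !addr_ge0 ?sqr_ge0. Qed.

Lemma qnorm_ge0 p : 0 <= qnorm p.
Proof. exact: sqrtr_ge0. Qed.

Lemma qnorm_sqr p : qnorm p ^+ 2 = qnorm2 p.
Proof. by rewrite sqr_sqrtr ?qnorm2_ge0. Qed.

Lemma qnorm2_eq0 p : qnorm2 p = 0 -> p = qzero R.
Proof.
rewrite qnorm2E => /eqP; rewrite !paddr_eq0 ?addr_ge0 ?sqr_ge0 // !sqrf_eq0.
by case: p => a b c d /= /andP[/andP[/andP[/eqP-> /eqP->] /eqP->] /eqP->].
Qed.

Lemma qnorm_neq0 p : p != qzero R -> qnorm p != 0.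
Proof.
apply: contraNN => /eqP p0; apply/eqP/qnorm2_eq0.
by rewrite -qnorm_sqr p0 expr0n.
Qed.

Lemma qnorm_zero : qnorm (qzero R) = 0.
Proof. by rewrite /qnorm qnorm2E /= expr0n /= !addr0 sqrtr0. Qed.

Lemma qnorm2_mul p q : qnorm2 (qmul p q) = qnorm2 p * qnorm2 q.
Proof. by rewrite !qnorm2E /=; ring. Qed.

Lemma qnorm_mul p q : qnorm (qmul p q) = qnorm p * qnorm q.
Proof. by rewrite /qnorm qnorm2_mul sqrtrM ?qnorm2_ge0. Qed.

Lemma qnorm2_conj p : qnorm2 (qconj p) = qnorm2 p.
Proof. by rewrite !qnorm2E /=; ring. Qed.

Lemma qnorm_conj p : qnorm (qconj p) = qnorm p.
Proof. by rewrite /qnorm qnorm2_conj. Qed.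

Lemma qnorm2_scale c p : qnorm2 (qscale c p) = c ^+ 2 * qnorm2 p.
Proof. by rewrite !qnorm2E /=; ring. Qed.

Definition qdot p q : R := q0 p * q0 q + q1 p * q1 q + q2 p * q2 q + q3 p * q3 q.

Lemma qnorm2_add p q : qnorm2 (qadd p q) = qnorm2 p + qnorm2 q + 2 * qdot p q.
Proof. by rewrite !qnorm2E /qdot /=; ring. Qed.

(* Cauchy-Schwarz, from Lagrange's identity
   |p|^2 |q|^2 = <p, q>^2 + sum_{k < l} (p_k q_l - p_l q_k)^2. *)
Lemma qdot_le p q : qdot p q <= qnorm p * qnorm q.
Proof.
have lagrange : qdot p q ^+ 2 <= qnorm2 p * qnorm2 q.
  have -> : qnorm2 p * qnorm2 q = qdot p q ^+ 2 +
      ((q0 p * q1 q - q1 p * q0 q) ^+ 2 + (q0 p * q2 q - q2 p * q0 q) ^+ 2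
     + (q0 p * q3 q - q3 p * q0 q) ^+ 2 + (q1 p * q2 q - q2 p * q1 q) ^+ 2
     + (q1 p * q3 q - q3 p * q1 q) ^+ 2 + (q2 p * q3 q - q3 p * q2 q) ^+ 2).
    by rewrite !qnorm2E /qdot; ring.
  by rewrite lerDl !addr_ge0 ?sqr_ge0.
have npq_ge0 : 0 <= qnorm p * qnorm q by rewrite mulr_ge0 ?qnorm_ge0.
rewrite -!qnorm_sqr -exprMn in lagrange; nra.
Qed.

Lemma qnorm_add p q : qnorm (qadd p q) <= qnorm p + qnorm q.
Proof.
rewrite -[qnorm p + qnorm q]ger0_norm ?addr_ge0 ?qnorm_ge0 // -sqrtr_sqr.
rewrite ler_sqrt ?sqr_ge0 // qnorm2_add sqrrD !qnorm_sqr.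
by have := qdot_le p q; lra.
Qed.

Lemma qnorm_big (I : Type) (r : seq I) (F : I -> quat R) :
  qnorm (\big[@qadd R/qzero R]_(i <- r) F i) <= \sum_(i <- r) qnorm (F i).
Proof.
elim: r => [|x r IH]; first by rewrite !big_nil qnorm_zero.
by rewrite !big_cons; apply: le_trans (qnorm_add _ _) _; apply: lerD.
Qed.

End QuaternionNorm.

Ltac quat_ring := apply: quat_coordP => -[|[|[|?]]] /=; ring.

Section Alignment.
Variable R : rcfType.
Implicit Types p q w a s : quat R.

Definition aligned s w1 w2 a : Prop := qmul (qmul (qconj w1) a) w2 = qscale (qnorm a) s.

Lemma aligned_zero s w1 w2 : aligned s w1 w2 (qzero R).
Proof.
rewrite /aligned qnorm_zero; apply: quat_coordP => -[|[|[|?]]] /=;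
by rewrite !(mulr0, mul0r, oppr0, subr0, addr0).
Qed.

Lemma qnorm_inv_qnorm2 a : a != qzero R -> (qnorm a)^-1 * qnorm2 a = qnorm a.
Proof. by move=> a0; rewrite -qnorm_sqr expr2 mulrA mulVf ?qnorm_neq0 ?mul1r. Qed.

(* Given the phase w at one end of a nonzero entry a, the phase at the other
   end can be chosen so that the entry is aligned with s; these are the two
   choices, depending on whether a sits above or below the diagonal. *)
Definition phase_right s w a := qscale (qnorm a)^-1 (qmul (qmul (qconj a) w) s).
Definition phase_left s w a := qscale (qnorm a)^-1 (qmul (qmul a w) (qconj s)).

Lemma aligned_phase_right s w a : qnorm2 w = 1 -> a != qzero R ->
  aligned s w (phase_right s w a) a.
Proof.
move=> w1 a0; rewrite /aligned -(qnorm_inv_qnorm2 a0) -[X in X * _]mulr1 -w1.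
by rewrite !qnorm2E; quat_ring.
Qed.

Lemma aligned_phase_left s w a : qnorm2 w = 1 -> a != qzero R ->
  aligned s (phase_left s w a) w a.
Proof.
move=> w1 a0; rewrite /aligned -(qnorm_inv_qnorm2 a0) -[X in X * _]mulr1 -w1.
by rewrite !qnorm2E; quat_ring.
Qed.

Lemma qnorm2_phase b w t a : qnorm2 b = qnorm2 a -> qnorm2 w = 1 -> qnorm2 t = 1 ->
  a != qzero R -> qnorm2 (qscale (qnorm a)^-1 (qmul (qmul b w) t)) = 1.
Proof.
move=> ba w1 t1 a0; rewrite qnorm2_scale !qnorm2_mul ba w1 t1 !mulr1.
by rewrite expr2 -mulrA qnorm_inv_qnorm2 // mulVf // qnorm_neq0.
Qed.

End Alignment.

(* The phases are assigned vertex by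
   vertex while growing a connected set of vertices; since the graph has no
   cycle, each new vertex has a single neighbour among those already
   treated, so only one new constraint has to be met. *)
Section TreeAlignment.
Variables (R : rcfType) (n : nat) (N : 'I_n -> 'I_n -> quat R).
Hypothesis hN : strictly_upper N.
Hypothesis htree : is_tree (graphN N).
Variable s : quat R.
Hypothesis s_unit : qnorm2 s = 1.

Local Notation e := (graphN N).

Definition induced (S : {set 'I_n}) : rel 'I_n := fun a b => [&& a \in S, b \in S & e a b].

Lemma graphN_sym : symmetric e.
Proof. by move=> a b; rewrite /graphN orbC. Qed.

Lemma induced_sym (S : {set 'I_n}) : symmetric (induced S).
Proof. by move=> a b; rewrite /induced graphN_sym andbCA !andbA. Qed.

Lemma path_induced_in (S : {set 'I_n}) x p : path (induced S) x p -> all (mem S) p.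
Proof. by elim: p x => //= y p IH x /andP[/and3P[_ -> _] /IH]. Qed.

Lemma boundary_edge (S : {set 'I_n}) a b : a \in S -> b \notin S -> connect e a b ->
  exists x y, [/\ x \in S, y \notin S & e x y].
Proof.
move=> aS bS /connectP[p]; elim: p a aS => /= [|y p IH] a aS.
  by move=> _ ab; rewrite ab aS in bS.
case/andP=> eay pth Eb; case: (boolP (y \in S)) => yS; first exact: IH yS pth Eb.
by exists a, y.
Qed.

(* No cycle: a vertex outside a connected set S is adjacent to at most one
   vertex of S. *)
Lemma unique_attachment (S : {set 'I_n}) u j v : u \in S -> j \in S -> v \notin S ->
  e u v -> e j v -> connect (induced S) u j -> j = u.
Proof.
move=> uS jS vS euv ejv /connectP[p pth Ej]; apply/eqP/negPn/negP => ju.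
have [_ [_ no_cycle]] := htree.
move: ju ejv; rewrite Ej; case: (shortenP pth) => p' pth' up' _ ju ejv.
apply: no_cycle; exists [:: v, u & p']; split.
- rewrite cons_uniq up' andbT inE negb_or; apply/andP; split.
    by apply: contraNneq vS => ->.
  by apply: contraNN vS => /(allP (path_induced_in pth')).
- by case: p' {pth' up'} ju ejv => [|x p'] //=; rewrite eqxx.
- rewrite /cycle rcons_cons /= rcons_path; apply/and3P; split => //.
    by rewrite graphN_sym.
  by apply: sub_path pth' => a b /and3P[].
Qed.

Lemma nonedge_zero i j : ~~ e i j -> N i j = qzero R /\ N j i = qzero R.
Proof. by rewrite /graphN negb_or !negbK => /andP[/eqP-> /eqP->]. Qed.

(* Extending the phases from u to its neighbour v, through the unique nonzero
   entry of N on the edge {u, v}. *)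
Definition phase_across (u v : 'I_n) (w : 'I_n -> quat R) : quat R :=
  if (u < v)%N then phase_right s (w u) (N u v) else phase_left s (w u) (N v u).

Lemma edge_entry u v : e u v ->
  if (u < v)%N then N u v != qzero R else N v u != qzero R.
Proof.
rewrite /graphN; case: ltnP => [uv | vu]; first by rewrite (hN (ltnW uv)) eqxx orbF.
by rewrite (hN vu) eqxx.
Qed.

Lemma phase_across_unit u v w : e u v -> qnorm2 (w u) = 1 -> qnorm2 (phase_across u v w) = 1.
Proof.
move=> /edge_entry; rewrite /phase_across; case: ifP => _ a0 w1.
  by apply: qnorm2_phase; rewrite ?qnorm2_conj.
by apply: qnorm2_phase; rewrite ?qnorm2_conj.
Qed.

Definition aligned_on (S : {set 'I_n}) (w : 'I_n -> quat R) : Prop :=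
  (forall i, qnorm2 (w i) = 1) /\
  (forall i j, i \in S -> j \in S -> aligned s (w i) (w j) (N i j)).

Lemma aligned_on_extend (S : {set 'I_n}) w u v :
  (forall x y, x \in S -> y \in S -> connect (induced S) x y) ->
  u \in S -> v \notin S -> e u v -> aligned_on S w ->
  aligned_on (v |: S) (fun i => if i == v then phase_across u v w else w i).
Proof.
move=> Sconn uS vS euv [w1 wS]; split => [i | i j].
  by case: eqP => _ //; apply: phase_across_unit.
have only_u x : x \in S -> x != u -> N v x = qzero R /\ N x v = qzero R.
  move=> xS xu; apply: nonedge_zero; apply: contra xu => evx; apply/eqP.
  by apply: unique_attachment uS xS vS euv _ (Sconn u x uS xS); rewrite graphN_sym.
have Nvv : N v v = qzero R by apply: hN.
rewrite !in_setU1; case: (eqVneq i v) => [->|iv]; case: (eqVneq j v) => [->|jv] //= iS jS.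
- by rewrite Nvv; apply: aligned_zero.
- have [->|ju] := eqVneq j u; last by rewrite (only_u j jS ju).1; apply: aligned_zero.
  have := edge_entry euv; rewrite /phase_across; case: ltnP => [uv _ | vu a0].
    by rewrite (hN (ltnW uv)); apply: aligned_zero.
  exact: aligned_phase_left.
- have [->|iu] := eqVneq i u; last by rewrite (only_u i iS iu).2; apply: aligned_zero.
  have := edge_entry euv; rewrite /phase_across; case: ltnP => [uv a0 | vu _].
    exact: aligned_phase_right.
  by rewrite (hN vu); apply: aligned_zero.
- exact: wS.
Qed.

Lemma aligned_grow (r0 : 'I_n) k : (k < n)%N -> exists S : {set 'I_n},
  [/\ #|S| = k.+1, r0 \in S, (forall a, a \in S -> connect (induced S) r0 a)
    & exists w, aligned_on S w].
Proof.
elim: k => [|k IH] kn.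
  exists [set r0]; split; rewrite ?cards1 ?set11 //.
    by move=> a; rewrite in_set1 => /eqP->; apply: connect0.
  exists (fun=> qreal 1); split => [i | i j]; first by rewrite qnorm2E /= expr1n expr0n /= !addr0.
  by rewrite !in_set1 => /eqP-> /eqP->; rewrite (hN (leqnn r0)); apply: aligned_zero.
have [S [cardS r0S r0conn [w wS]]] := IH (ltnW kn).
have [b _ bS] : exists2 b, b \in [set: 'I_n] & b \notin S.
  apply/subsetPn; apply: contraTN kn => /subset_leq_card.
  by rewrite cardsT card_ord cardS -leqNgt.
have [u [v [uS vS euv]]] := boundary_edge r0S bS (htree.1 r0 b).
have Sconn x y : x \in S -> y \in S -> connect (induced S) x y.
  move=> xS yS; apply: connect_trans (r0conn y yS).
  by rewrite (sym_connect_sym (@induced_sym S)); apply: r0conn.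
have grow_conn x y : connect (induced S) x y -> connect (induced (v |: S)) x y.
  apply: connect_sub => a c /and3P[aS cS eac]; apply: connect1.
  by rewrite /induced !in_setU1 aS cS eac !orbT.
exists (v |: S); split.
- by rewrite cardsU1 vS cardS.
- by rewrite setU1r.
- move=> a; rewrite in_setU1 => /orP[/eqP-> | aS]; last exact/grow_conn/r0conn.
  apply: connect_trans (grow_conn _ _ (r0conn u uS)) (connect1 _).
  by rewrite /induced !in_setU1 eqxx uS orbT euv.
- by eexists; apply: aligned_on_extend Sconn uS vS euv wS.
Qed.

Lemma tree_alignment : (0 < n)%N -> exists w : 'I_n -> quat R,
  (forall i, qnorm2 (w i) = 1) /\ (forall i j, aligned s (w i) (w j) (N i j)).
Proof.
move=> n_gt0; have lt_pred : (n.-1 < n)%N by rewrite ltn_predL.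
have [S [cardS _ _ [w [w1 wS]]]] := aligned_grow (Ordinal n_gt0) lt_pred.
have ST : S = setT by apply/eqP; rewrite eqEcard subsetT cardsT card_ord cardS (prednK n_gt0) leqnn.
by exists w; split => // i j; apply: wS; rewrite ST inE.
Qed.

End TreeAlignment.

(* They are stated over
   any commutative ring so that they can be evaluated on polynomials. *)
Section Forms.
Variables (T : comNzRingType) (n : nat).
Implicit Types (y c : 'I_n -> T) (a : 'I_n -> 'I_n -> T).

Definition sqsum y : T := \sum_i y i ^+ 2.
Definition wsum c y : T := \sum_i c i * y i ^+ 2.
Definition cross a y : T := \sum_i \sum_(j | i != j) y i * y j * a i j.

Lemma sqsum_scale t y : sqsum (fun i => t * y i) = t ^+ 2 * sqsum y.
Proof. by rewrite /sqsum mulr_sumr; apply: eq_bigr => i _; rewrite exprMn. Qed.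

Lemma wsum_scale c t y : wsum c (fun i => t * y i) = t ^+ 2 * wsum c y.
Proof. by rewrite /wsum mulr_sumr; apply: eq_bigr => i _; rewrite exprMn mulrCA. Qed.

Lemma cross_scale a t y : cross a (fun i => t * y i) = t ^+ 2 * cross a y.
Proof.
rewrite /cross mulr_sumr; apply: eq_bigr => i _; rewrite mulr_sumr.
by apply: eq_bigr => j _; rewrite expr2; ring.
Qed.

End Forms.

Section NumericalRange.
Variables (R : rcfType) (n : nat) (d : 'I_n -> R) (N : 'I_n -> 'I_n -> quat R).
Hypothesis hN : strictly_upper N.
Implicit Types (x : 'I_n -> quat R) (b : 'I_n -> R).

Definition offdiag_form x : quat R :=
  qsum (fun i => qsum (fun j => qmul (qmul (qconj (x i)) (N i j)) (x j))).

Lemma qform_split x :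
  qform (diag_plus d N) x = qadd (qreal (\sum_i d i * qnorm2 (x i))) (offdiag_form x).
Proof.
have distr (p a1 a2 w : quat R) : qmul (qmul (qconj p) (qadd a1 a2)) w =
    qadd (qmul (qmul (qconj p) a1) w) (qmul (qmul (qconj p) a2) w) by quat_ring.
have diag (p : quat R) r : qmul (qmul (qconj p) (qreal r)) p = qreal (r * qnorm2 p).
  by rewrite qnorm2E; quat_ring.
have zero (p w : quat R) k : qcoord k (qmul (qmul (qconj p) (qzero R)) w) = 0.
  by case: k => [|[|[|k]]] /=; rewrite !(mulr0, mul0r, oppr0, subr0, addr0).
apply: quat_coordP => k; rewrite /qform /offdiag_form qcoord_add qcoord_real !qcoord_sum.
rewrite mulr_sumr -big_split; apply: eq_bigr => i _; rewrite !qcoord_sum /diag_plus.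
under eq_bigr => j _ do rewrite distr qcoord_add.
rewrite big_split /=; congr (_ + _).
rewrite (bigD1 i) //= eqxx diag qcoord_real big1 ?addr0 // => j /negbTE.
by rewrite eq_sym => ->; apply: zero.
Qed.

Lemma qsum_conj_mul x :
  qsum (fun i => qmul (qconj (x i)) (x i)) = qreal (\sum_i qnorm2 (x i)).
Proof.
have conj_mul (p : quat R) : qmul (qconj p) p = qreal (qnorm2 p) by rewrite qnorm2E; quat_ring.
apply: quat_coordP => k; rewrite qcoord_sum qcoord_real mulr_sumr.
by apply: eq_bigr => i _; rewrite conj_mul qcoord_real.
Qed.

Lemma qunit_vecE x : qunit_vec x <-> \sum_i qnorm2 (x i) = 1.
Proof. by rewrite /qunit_vec qsum_conj_mul; split => [/qreal_inj | ->]. Qed.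

(* Since N has zero diagonal, the sum defining r(d) may run over all (i, j). *)
Lemma rvalue_full b : rvalue N b = \sum_i \sum_j b i * b j * qnorm (N i j).
Proof.
apply: eq_bigr => i _; rewrite [RHS](bigD1 i) //= (hN (leqnn i)) qnorm_zero mulr0 add0r.
by apply: eq_bigl => j; rewrite eq_sym.
Qed.

Lemma wsum_between lo hi b : (forall i, lo <= d i <= hi) -> sqsum b = 1 ->
  lo <= wsum d b <= hi.
Proof.
move=> dlohi b1; rewrite -[lo]mulr1 -[hi]mulr1 -b1 !mulr_sumr.
by apply/andP; split; apply: ler_sum => i _; apply: ler_wpM2r; rewrite ?sqr_ge0 //;
  case/andP: (dlohi i).
Qed.

(* W(A) is contained in the union of the disks: for a unit vector x, with
   beta_i = |x_i| and dd = sum_i d_i beta_i^2, the triangle inequality bounds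
   |x^* A x - dd| by sum_{i <> j} beta_i beta_j |a_ij| <= r(dd). *)
Lemma numrange_sub_disks dlo dhi (r : R -> R) :
  (forall i, dlo <= d i <= dhi) ->
  (forall dd, dlo <= dd <= dhi -> is_r_max d N dd (r dd)) ->
  forall q, numrange (diag_plus d N) q ->
  exists dd, dlo <= dd <= dhi /\ qdisk (qreal dd) (r dd) q.
Proof.
move=> dlohi hr q [x [/qunit_vecE x1 ->]].
pose b i := qnorm (x i).
have b1 : sqsum b = 1 by rewrite -x1; apply: eq_bigr => i _; rewrite qnorm_sqr.
have bsphere : pos_sphere b by split=> // i; apply: qnorm_ge0.
have bmean : wsum d b = \sum_i d i * qnorm2 (x i).
  by apply: eq_bigr => i _; rewrite qnorm_sqr.
have bdd := wsum_between dlohi b1.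
exists (wsum d b); split => //; have [_ rmax] := hr _ bdd.
apply: le_trans (rmax b bsphere erefl); rewrite /qdisk.
have -> : qsub (qform (diag_plus d N) x) (qreal (wsum d b)) = offdiag_form x.
  apply: quat_coordP => k; rewrite qform_split bmean qcoord_sub qcoord_add.
  by rewrite addrC addKr.
rewrite rvalue_full; apply: le_trans (qnorm_big _ _) _; apply: ler_sum => i _.
apply: le_trans (qnorm_big _ _) _; apply: ler_sum => j _.
by rewrite !qnorm_mul qnorm_conj mulrAC.
Qed.

Lemma unit_direction (del : quat R) (rho : R) : 0 <= rho -> qnorm2 del = rho ^+ 2 ->
  exists s, qnorm2 s = 1 /\ del = qscale rho s.
Proof.
move=> rho_ge0 del_rho; have [rho0 | rho_neq0] := eqVneq rho 0.
  exists (qreal 1); split; first by rewrite qnorm2E /= expr1n expr0n /= !addr0.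
  rewrite (qnorm2_eq0 (_ : qnorm2 del = 0)) ?del_rho ?rho0 ?expr0n //.
  by apply: quat_coordP => -[|[|[|k]]] /=; rewrite mul0r.
exists (qscale rho^-1 del); split.
  by rewrite qnorm2_scale del_rho exprVn mulVf // expf_neq0.
by apply: quat_coordP => k; rewrite !qcoord_scale mulrA mulfV // mul1r.
Qed.

(* The converse construction: if beta in S^+ and |q - dd| = r_beta, where
   dd = sum_i d_i beta_i^2 and r_beta = sum_{i <> j} beta_i beta_j |a_ij|,
   write q - dd = r_beta s with |s| = 1; with phases w aligning N with s
   (tree_alignment), the unit vector x_i = beta_i w_i satisfies
   x^* A x = dd + sum_{i,j} beta_i beta_j |a_ij| s = q. *)
Lemma numrange_of_sphere_point (n_gt0 : (0 < n)%N) (htree : is_tree (graphN N))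
    b q : pos_sphere b -> qnorm2 (qsub q (qreal (wsum d b))) = rvalue N b ^+ 2 ->
  numrange (diag_plus d N) q.
Proof.
case=> b1 b_ge0 hq.
have rho_ge0 : 0 <= rvalue N b.
  by apply: sumr_ge0 => i _; apply: sumr_ge0 => j _; rewrite !mulr_ge0 ?qnorm_ge0.
have [s [s1 del_s]] := unit_direction rho_ge0 hq.
have [w [w1 waligned]] := tree_alignment hN htree s1 n_gt0.
have scale_form c1 c2 (w1' a w2' : quat R) : qmul (qmul (qconj (qscale c1 w1')) a) (qscale c2 w2') =
    qscale (c1 * c2) (qmul (qmul (qconj w1') a) w2') by quat_ring.
exists (fun i => qscale (b i) (w i)); split.
  by apply/qunit_vecE; rewrite -b1; apply: eq_bigr => i _; rewrite qnorm2_scale w1 mulr1.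
apply: quat_coordP => k; rewrite qform_split qcoord_add.
have -> : \sum_i d i * qnorm2 (qscale (b i) (w i)) = wsum d b.
  by apply: eq_bigr => i _; rewrite qnorm2_scale w1 mulr1.
have -> : qcoord k (offdiag_form (fun i => qscale (b i) (w i))) = rvalue N b * qcoord k s.
  rewrite rvalue_full qcoord_sum mulr_suml; apply: eq_bigr => i _.
  rewrite qcoord_sum mulr_suml; apply: eq_bigr => j _.
  by rewrite scale_form waligned !qcoord_scale mulrA.
by rewrite -qcoord_scale -del_s qcoord_sub qcoord_real addrC subrK.
Qed.

End NumericalRange.

(* The quartic gap of a vector y:
     cross(y)^2 - (x0 |y|^2 - wsum(y))^2 - v |y|^4.
   With x0 = Re q and v = |Im q|^2 it is homogeneous of degree 4, and on the
   unit sphere it equals r_beta^2 - |q - dd|^2 (gap_on_sphere), so its zeros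
   are exactly the directions whose disk has q on its boundary. *)
Section QuarticGap.
Variables (T : comNzRingType) (n : nat).

Definition quartic_gap (c : 'I_n -> T) (a : 'I_n -> 'I_n -> T) (x0 v : T) (y : 'I_n -> T) : T :=
  cross a y ^+ 2 - (x0 * sqsum y - wsum c y) ^+ 2 - v * sqsum y ^+ 2.

Lemma quartic_gap_scale c a x0 v t y :
  quartic_gap c a x0 v (fun i => t * y i) = t ^+ 4 * quartic_gap c a x0 v y.
Proof. by rewrite /quartic_gap sqsum_scale wsum_scale cross_scale; ring. Qed.

End QuarticGap.

Lemma quartic_gap_rmorph (T T' : comNzRingType) (n : nat) (f : {rmorphism T -> T'})
    (c : 'I_n -> T) a x0 v y c' a' y' :
  (forall i, f (c i) = c' i) -> (forall i j, f (a i j) = a' i j) -> (forall i, f (y i) = y' i) ->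
  f (quartic_gap c a x0 v y) = quartic_gap c' a' (f x0) (f v) y'.
Proof.
move=> fc fa fy.
have fsq : f (sqsum y) = sqsum y'.
  by rewrite rmorph_sum; apply: eq_bigr => i _; rewrite rmorphXn fy.
have fw : f (wsum c y) = wsum c' y'.
  by rewrite rmorph_sum; apply: eq_bigr => i _; rewrite rmorphM rmorphXn fc fy.
have fx : f (cross a y) = cross a' y'.
  rewrite rmorph_sum; apply: eq_bigr => i _; rewrite rmorph_sum.
  by apply: eq_bigr => j _; rewrite !rmorphM !fy fa.
by rewrite /quartic_gap !(rmorphB, rmorphM, rmorphXn) fsq fw fx.
Qed.

Section Boundary.
Variables (R : rcfType) (n : nat) (d : 'I_n -> R) (N : 'I_n -> 'I_n -> quat R).
Variable q : quat R.

Definition qimag2 (p : quat R) : R := q1 p ^+ 2 + q2 p ^+ 2 + q3 p ^+ 2.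

Local Notation gap := (quartic_gap d (fun i j => qnorm (N i j)) (q0 q) (qimag2 q)).

Lemma gap_on_sphere b : sqsum b = 1 ->
  gap b = rvalue N b ^+ 2 - qnorm2 (qsub q (qreal (wsum d b))).
Proof.
move=> b1; rewrite /quartic_gap b1 expr1n !mulr1 qnorm2E /qimag2 /=.
by rewrite (_ : cross _ b = rvalue N b) //; ring.
Qed.

Lemma gap_root_boundary (y : 'I_n -> R) : (forall i, 0 <= y i) -> 0 < sqsum y ->
  gap y = 0 ->
  exists b, pos_sphere b /\ qnorm2 (qsub q (qreal (wsum d b))) = rvalue N b ^+ 2.
Proof.
move=> y_ge0 y_gt0 gap0; set c := (Num.sqrt (sqsum y))^-1.
have c2 : c ^+ 2 * sqsum y = 1 by rewrite exprVn sqr_sqrtr ?ltW // mulVf ?gt_eqF.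
have b1 : sqsum (fun i => c * y i) = 1 by rewrite sqsum_scale.
exists (fun i => c * y i); split.
  by split=> // i; rewrite mulr_ge0 ?y_ge0 // invr_ge0 sqrtr_ge0.
apply/eqP; rewrite eq_sym -subr_eq0 -gap_on_sphere //.
by rewrite quartic_gap_scale gap0 mulr0.
Qed.

(* If q lies in the disk of some beta0 in S^+, then moving beta along the
   segment towards a coordinate vector e_k (whose disk is the point d_k) the
   gap changes sign; by the intermediate value theorem for polynomials some
   point of the segment has q on the boundary of its disk. *)
Lemma boundary_point (k0 : 'I_n) b0 : pos_sphere b0 ->
  qnorm (qsub q (qreal (wsum d b0))) <= rvalue N b0 ->
  exists b, pos_sphere b /\ qnorm2 (qsub q (qreal (wsum d b))) = rvalue N b ^+ 2.
Proof.
case=> b01 b0_ge0 q_in_disk.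
pose e (i : 'I_n) : R := (i == k0)%:R.
pose Y i : {poly R} := (b0 i)%:P + (e i - b0 i)%:P * 'X.
pose G := quartic_gap (fun i => (d i)%:P) (fun i j => (qnorm (N i j))%:P)
                      (q0 q)%:P (qimag2 q)%:P Y.
have G_eval t y : (forall i, (Y i).[t] = y i) -> G.[t] = gap y.
  move=> Yy; rewrite -horner_evalE (@quartic_gap_rmorph _ _ _ (horner_eval t) _ _ _ _ _ d
    (fun i j => qnorm (N i j)) y) => [|i|i j|i] /=; rewrite ?horner_evalE ?hornerC //.
have G0 : 0 <= G.[0].
  rewrite (G_eval 0 b0) => [|i]; last by rewrite hornerD hornerC hornerCM hornerX mulr0 addr0.
  rewrite gap_on_sphere // subr_ge0 -qnorm_sqr.
  have := qnorm_ge0 (qsub q (qreal (wsum d b0))); nra.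
have G1 : G.[1] <= 0.
  rewrite (G_eval 1 e) => [|i]; last by rewrite hornerD hornerC hornerCM hornerX mulr1 addrC subrK.
  have cross_e : cross (fun i j => qnorm (N i j)) e = 0.
    apply: big1 => i _; apply: big1 => j ij; rewrite /e.
    case: eqP => [ik0|_]; last by rewrite !mul0r.
    case: eqP => [jk0|_]; last by rewrite mulr0 mul0r.
    by move: ij; rewrite ik0 jk0 eqxx.
  rewrite /quartic_gap cross_e expr0n /= sub0r.
  have : 0 <= qimag2 q by rewrite /qimag2 !addr_ge0 ?sqr_ge0.
  have := sqr_ge0 (q0 q * sqsum e - wsum d e); have := sqr_ge0 (sqsum e); nra.
have [t /andP[t_ge0 t_le1]] : exists2 t, 0 <= t <= 1 & root (- G) t.
  by apply: poly_ivt => //; rewrite !hornerN oppr_le0 oppr_ge0 G0 G1.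
pose y i := b0 i * (1 - t) + e i * t.
rewrite rootN => /rootP; rewrite (G_eval t y) => [gap0|i]; last first.
  by rewrite hornerD hornerC hornerCM hornerX /y; ring.
have y_ge0 i : 0 <= y i by rewrite addr_ge0 ?mulr_ge0 ?subr_ge0 ?ler0n.
apply: (gap_root_boundary y_ge0) gap0.
have [t0 | t_neq0] := eqVneq t 0.
  suff -> : sqsum y = 1 by exact: ltr01.
  by rewrite -b01; apply: eq_bigr => i _; rewrite /y t0 subr0 mulr1 mulr0 addr0.
apply: lt_le_trans (_ : 0 < y k0 ^+ 2) _.
  have t_gt0 : 0 < t by rewrite lt_def t_neq0.
  have : 0 <= b0 k0 * (1 - t) by rewrite mulr_ge0 ?subr_ge0.
  by move=> ?; rewrite exprn_gt0 // /y /e eqxx mul1r; lra.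
rewrite /sqsum (bigD1 k0) //= lerDl; apply: sumr_ge0 => i _; exact: sqr_ge0.
Qed.

End Boundary.

Unset Implicit Arguments.

Theorem theorem4p2 (R : rcfType) (n : nat) (n_gt0 : (0 < n)%N)
  (d : 'I_n -> R) (N : 'I_n -> 'I_n -> quat R)
  (hN : strictly_upper N) (htree : is_tree (graphN N))
  (dlo dhi : R)
  (hlo : (exists i, d i = dlo) /\ forall i, dlo <= d i)
  (hhi : (exists i, d i = dhi) /\ forall i, d i <= dhi)
  (r : R -> R)
  (hr : forall dd, dlo <= dd <= dhi -> is_r_max d N dd (r dd)) :
  forall q : quat R,
    numrange (diag_plus d N) q <->
    exists dd, dlo <= dd <= dhi /\ qdisk (qreal dd) (r dd) q.
Proof.
move=> q; split.
  by apply: (numrange_sub_disks hN _ hr) => i; rewrite hlo.2 hhi.2.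
case=> dd [dd_range q_in_disk].
have [[b0 [b0_sphere b0_mean b0_r]] _] := hr dd dd_range.
rewrite /qdisk -b0_r -b0_mean in q_in_disk.
have [b [b_sphere q_on_boundary]] := boundary_point (Ordinal n_gt0) b0_sphere q_in_disk.
exact: (numrange_of_sphere_point hN n_gt0 htree b_sphere q_on_boundary).
Qed.
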